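(* Let $\pi\colon(X,T)\to(Y,T)$ be a factor map between minimal subshifts. Then either $\pi$ is distal or there exists $y\in Y$ such that the fiber $\pi^{-1}(y)$ contains a right asymptotic pair or a left asymptotic pair.
   Context: A factor map is distal if whenever $\pi(x)=\pi(x')$ and $x\neq x'$, $\inf_{k\in\mathbb{Z}}\mathrm{dist}(T^kx,T^kx')>0$. A pair $(x,\tilde x)\in\mathcal{A}^{\mathbb{Z}}\times\mathcal{A}^{\mathbb{Z}}$ is right asymptotic if there is $k\in\mathbb{Z}$ with $x_{(k,\infty)}=\tilde x_{(k,\infty)}$ and $x_k\neq\tilde x_k$; left asymptotic is defined symmetrically with $(-\infty,k)$. *)

From mathcomp Require Import all_boot all_algebra.
From mathcomp Require Import boolp.
From Stdlib Require Import Reals.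
Set Implicit Arguments. Unset Strict Implicit. Unset Printing Implicit Defensive.
Import GRing.Theory Num.Theory.

Local Open Scope ring_scope.

Definition config (A : finType) := int -> A.

Definition shift (A : finType) (x : config A) : config A := fun i => x (i + 1).
Definition shiftk (A : finType) (k : int) (x : config A) : config A :=
  fun i => x (i + k).

Definition agree_on (A : finType) (n : nat) (x y : config A) : Prop :=
  forall i : int, (`|i| <= n)%N -> x i = y i.

(* Standard metric on A^Z: dist x y = 0 if x = y, and 2^{-m} otherwise,
   where m = min { |i| : x_i <> y_i }. *)
Definition first_diff (A : finType) (x y : config A) : nat :=
  match pselect (exists n : nat, exists i : int, `|i|%N = n /\ x i <> y i) with
  | left h => ex_minn (P := fun n => `[< exists i : int, `|i|%N = n /\ x i <> y i >])
                 (let: ex_intro n hn := h in ex_intro _ n (asboolT hn))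
  | right _ => 0%N
  end.

Definition dist (A : finType) (x y : config A) : R :=
  match pselect (x = y) with
  | left _ => 0%R
  | right _ => ((/ 2) ^ first_diff x y)%R
  end.

Definition closed_set (A : finType) (X : config A -> Prop) : Prop :=
  forall y : config A, (forall n : nat, exists x, X x /\ agree_on n x y) -> X y.

Definition shift_invariant (A : finType) (X : config A -> Prop) : Prop :=
  forall x : config A, X x <-> X (shift x).

Definition subshift (A : finType) (X : config A -> Prop) : Prop :=
  closed_set X /\ shift_invariant X.

Definition minimal_subshift (A : finType) (X : config A -> Prop) : Prop :=
  subshift X /\ (exists x, X x) /\
  forall Z : config A -> Prop, subshift Z -> (exists z, Z z) ->
    (forall z, Z z -> X z) -> forall x, X x -> Z x.

Definition factor_map (A B : finType) (X : config A -> Prop) (Y : config B -> Prop)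
    (pi : config A -> config B) : Prop :=
  [/\ (forall x, X x -> Y (pi x)),
      (forall y, Y y -> exists x, X x /\ pi x = y),
      (forall x, X x -> pi (shift x) = shift (pi x)) &
      (forall x, X x -> forall n : nat, exists m : nat,
          forall x', X x' -> agree_on m x x' -> agree_on n (pi x) (pi x'))].

Definition distal (A B : finType) (X : config A -> Prop)
    (pi : config A -> config B) : Prop :=
  forall x x', X x -> X x' -> pi x = pi x' -> x <> x' ->
    exists eps : R, (0 < eps)%R /\
      forall k : int, (eps <= dist (shiftk k x) (shiftk k x'))%R.

Definition right_asymptotic (A : finType) (x x' : config A) : Prop :=
  exists k : int, (forall i : int, k < i -> x i = x' i) /\ x k <> x' k.

Definition left_asymptotic (A : finType) (x x' : config A) : Prop :=
  exists k : int, (forall i : int, i < k -> x i = x' i) /\ x k <> x' k.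

From Pilot Require Import Defs.
From mathcomp Require Import all_boot all_algebra zify boolp.
From Stdlib Require Import Reals Lra.
Set Implicit Arguments. Unset Strict Implicit. Unset Printing Implicit Defensive.
Import GRing.Theory Num.Theory.

Local Open Scope ring_scope.

(* If pi is not distal, some fiber contains a proximal pair x <> x': for every
   n some shift of x and x' agrees on [-n, n].  These windows of agreement
   avoid a fixed position where x and x' differ, so for infinitely many n they
   lie on the same side of it, say to its right.  Then there are positions d
   where x and x' differ and agree on (d, d + n].  Shifting d to 0 and passing
   to a limit point (by compactness), the limit pair lies in X, in a single
   fiber by continuity and equivariance of pi, differs at 0 and agrees on
   (0, oo): it is right asymptotic. *)

Definition infinitely_often (P : nat -> Prop) : Prop :=
  forall N : nat, exists2 n, (N <= n)%nat & P n.

Lemma infinitely_often_pigeonhole (F : finType) (f : nat -> F) (P : nat -> Prop) :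
  infinitely_often P -> exists v, infinitely_often (fun n => P n /\ f n = v).
Proof.
move=> hP; apply: contrapT => /forallNP hv.
have /choice [N hN] : forall v, exists N, forall n, (N <= n)%nat -> ~ (P n /\ f n = v).
  move=> v; apply: contrapT => /forallNP hn; apply: (hv v) => N.
  have /existsNP [n /not_implyP [hNn /contrapT hPn]] := hn N.
  by exists n.
have [n hn hPn] := hP (\max_(v : F) N v).
by apply: (hN (f n) n _ (conj hPn erefl)); apply: leq_trans hn; exact: leq_bigmax.
Qed.

Lemma antitone_or_forall (P Q : nat -> Prop) :
  (forall m n, (m <= n)%nat -> P n -> P m) -> (forall m n, (m <= n)%nat -> Q n -> Q m) ->
  (forall n, P n \/ Q n) -> (forall n, P n) \/ (forall n, Q n).
Proof.
move=> hP hQ hPQ; case: (pselect (forall n, P n)) => [|/existsNP [n0 hn0]]; first by left.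
right=> n; case: (hPQ (maxn n n0)) => h.
- by case: hn0; apply: hP h; exact: leq_maxr.
- by apply: hQ h; exact: leq_maxl.
Qed.

Lemma dependent_choice (T : Type) (P : nat -> T -> Prop) (R : nat -> T -> T -> Prop)
    (t0 : T) :
  P 0%nat t0 -> (forall m t, P m t -> exists t', P m.+1 t' /\ R m t t') ->
  exists f : nat -> T, forall m, P m (f m) /\ R m (f m) (f m.+1).
Proof.
move=> h0 hstep.
have /choice [g hg] : forall m, exists g : T -> T,
    forall t, P m t -> P m.+1 (g t) /\ R m t (g t).
  move=> m; suff /choice [g hg] : forall t, exists t', P m t -> P m.+1 t' /\ R m t t'.
    by exists g.
  by move=> t; case: (pselect (P m t)) => [/hstep [t' ht']|hnP]; [exists t' | exists t].
have hP : forall m, P m (iteri m g t0).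
  by elim=> [|m IH] //; rewrite iteriS; exact: (hg m _ IH).1.
exists (fun m => iteri m g t0) => m.
by rewrite iteriS; split; [exact: hP | exact: (hg m _ (hP m)).2].
Qed.

Lemma int_ind_step (P : int -> Prop) :
  P 0 -> (forall k, P k <-> P (k + 1)) -> forall k, P k.
Proof.
move=> h0 hS; elim/int_rect => [//|n IH|n IH].
- by rewrite -addn1 PoszD; exact: (hS n).1.
- by apply: (hS _).2; have -> : - (n.+1)%:Z + 1 = - n%:Z by lia.
Qed.

Section Configurations.
Variable C : finType.
Implicit Types (x y z : config C) (k : int).

Lemma agree_on_le m n x y : (m <= n)%nat -> agree_on n x y -> agree_on m x y.
Proof. by move=> hmn h i hi; apply: h; lia. Qed.

Lemma agree_on_sym n x y : agree_on n x y -> agree_on n y x.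
Proof. by move=> h i hi; rewrite h. Qed.

Lemma agree_on_trans n x y z : agree_on n x y -> agree_on n y z -> agree_on n x z.
Proof. by move=> hxy hyz i hi; rewrite hxy // hyz. Qed.

Lemma agree_on_first_diff x y (i : int) : (`|i| < first_diff x y)%nat -> x i = y i.
Proof.
rewrite /first_diff; case: pselect => [h|//].
case: ex_minnP => m _ hmin hlt; apply: contrapT => hne.
suff : (m <= `|i|)%nat by lia.
by apply: hmin; apply/asboolP; exists i.
Qed.

Lemma shiftk_inj k : injective (@shiftk C k).
Proof.
move=> x y /(congr1 (fun u => u (_ - k))) h; apply: funext => i.
by have := h i; rewrite /shiftk subrK.
Qed.

Lemma shift_shiftk k x : shift (shiftk k x) = shiftk (k + 1) x.
Proof. by apply: funext => i; rewrite /shift /shiftk -addrA (addrC 1). Qed.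

Lemma shiftk0 x : shiftk 0 x = x.
Proof. by apply: funext => i; rewrite /shiftk addr0. Qed.

Lemma shift_inj : injective (@shift C).
Proof. by move=> x y h; apply: (@shiftk_inj 1). Qed.

Lemma shift_invariant_shiftk (X : config C -> Prop) :
  shift_invariant X -> forall k x, X x -> X (shiftk k x).
Proof.
move=> hX k x hx; elim/int_ind_step: k => [|k]; first by rewrite shiftk0.
by rewrite -shift_shiftk.
Qed.

Definition window (m : nat) x : {ffun 'I_(m.*2.+1) -> C} :=
  [ffun j : 'I_(m.*2.+1) => x (j%:Z - m%:Z)].

Lemma window_agree_on m x y : window m x = window m y -> agree_on m x y.
Proof.
move=> h i hi.
pose j := absz (i + m%:Z).
have hj : (j < m.*2.+1)%nat by rewrite /j; lia.
move/ffunP: h => /(_ (Ordinal hj)); rewrite !ffunE /=.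
by have -> : j%:Z - m%:Z = i by rewrite /j; lia.
Qed.

Lemma cluster_window (w : nat -> config C) (Q : nat -> Prop) m :
  infinitely_often Q ->
  exists2 n0, Q n0 & infinitely_often (fun n => Q n /\ agree_on m (w n) (w n0)).
Proof.
move=> /(infinitely_often_pigeonhole (fun n => window m (w n))) [v hv].
have [n0 _ [hQ0 hv0]] := hv 0%nat.
exists n0 => // N; have [n hn [hQ hvn]] := hv N.
by exists n => //; split => //; apply: window_agree_on; rewrite hvn hv0.
Qed.

Lemma agree_on_diagonal (f : nat -> config C) :
  (forall m, agree_on m (f m) (f m.+1)) ->
  forall m, agree_on m (f m) (fun i => f `|i|%nat i).
Proof.
move=> hf.
have coh : forall l m, agree_on m (f m) (f (m + l)%nat).
  elim=> [|l IH] m; first by rewrite addn0.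
  apply: agree_on_trans (IH m) _; rewrite addnS.
  exact: agree_on_le (leq_addr l m) (hf _).
move=> m i hi; rewrite -(subnKC hi).
by symmetry; apply: coh; lia.
Qed.

Lemma cluster_point (w : nat -> config C) :
  exists c, forall m, infinitely_often (fun n => agree_on m (w n) c).
Proof.
pose P m c := infinitely_often (fun n => agree_on m (w n) c).
have [c0 hc0] : exists c0, P 0%nat c0.
  have [n0 _ h] := cluster_window w 0 (fun N => ex_intro2 _ _ N (leqnn N) I).
  by exists (w n0) => N; have [n hn [_ ?]] := h N; exists n.
have step : forall m c, P m c -> exists c', P m.+1 c' /\ agree_on m c c'.
  move=> m c /(cluster_window w m.+1) [n0 hn0 h].
  exists (w n0); split; last exact: agree_on_sym.
  by move=> N; have [n hn [_ ?]] := h N; exists n.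
have [f hf] := dependent_choice hc0 step.
exists (fun i => f `|i|%nat i) => m N.
have [n hn hag] := (hf m).1 N.
exists n => //; apply: agree_on_trans hag _.
by apply: agree_on_diagonal => k; exact: (hf k).2.
Qed.

Definition mirror x : config C := fun i => x (- i).

Lemma agree_on_shiftk_mirror n k x y :
  agree_on n (shiftk k x) (shiftk k y) ->
  agree_on n (shiftk (- k) (mirror x)) (shiftk (- k) (mirror y)).
Proof.
move=> h i hi; have := h (- i); rewrite /shiftk /mirror opprD opprK.
by apply; rewrite normrN.
Qed.

Definition proximal x y := forall n : nat, exists k, agree_on n (shiftk k x) (shiftk k y).

Definition disagree_then_agree (n : nat) x y :=
  exists d, x d <> y d /\ forall i : nat, (0 < i <= n)%nat -> x (d + i%:Z) = y (d + i%:Z).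

Lemma disagree_then_agree_le m n x y :
  (m <= n)%nat -> disagree_then_agree n x y -> disagree_then_agree m x y.
Proof. by move=> hmn [d [hd h]]; exists d; split => // i hi; apply: h; lia. Qed.

Lemma last_in_range (P : pred int) (j b : int) : P j -> j <= b ->
  exists d, [/\ d <= b, P d & forall i, d < i <= b -> ~~ P i].
Proof.
move=> hj hjb.
have exP : exists t : nat, P (b - t%:Z).
  by exists (absz (b - j)); have -> : b - (absz (b - j))%:Z = j by lia.
case: (ex_minnP exP) => t ht hmin; exists (b - t%:Z); split => //; first lia.
move=> i hi; apply/negP => hPi.
have := hmin (absz (b - i)); have -> : b - (absz (b - i))%:Z = i by lia.
move=> /(_ hPi); lia.
Qed.

Lemma disagree_then_agree_of_window n k (j : int) x y :
  agree_on n (shiftk k x) (shiftk k y) -> x j <> y j -> j <= k + n%:Z ->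
  disagree_then_agree n x y.
Proof.
move=> hag hj hjb.
have [d [hdb /eqP hd hlast]] :=
  last_in_range (P := fun i => x i != y i) (introN eqP hj) hjb.
have hdk : d < k - n%:Z.
  apply: contrapT => hkd; apply: hd.
  by have := hag (d - k); rewrite /shiftk subrK; apply; lia.
by exists d; split => // i hi; apply/eqP/negPn/hlast; lia.
Qed.

Lemma proximal_disagree_then_agree x y : x <> y -> proximal x y ->
  (forall n, disagree_then_agree n x y) \/
  (forall n, disagree_then_agree n (mirror x) (mirror y)).
Proof.
move=> hne hprox.
have [j hj] : exists j, x j <> y j.
  by apply: contrapT => /forallNP h; apply: hne; apply: funext => j; apply: contrapT.
apply: antitone_or_forall => [m n|m n|n]; try exact: disagree_then_agree_le.
have [k hag] := hprox n.
have hout : j < k - n%:Z \/ k + n%:Z < j.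
  have : ~ (`|j - k| <= n%:Z) by move=> /hag; rewrite /shiftk subrK.
  lia.
case: hout => hjk; [left | right].
- by apply: disagree_then_agree_of_window hag hj _; lia.
- apply: (disagree_then_agree_of_window (j := - j) (agree_on_shiftk_mirror hag)).
  + by rewrite /mirror opprK.
  + lia.
Qed.

End Configurations.

Section Distance.
Local Open Scope R_scope.
Variable C : finType.
Implicit Types x y : config C.

Lemma dist_ge_not_agree_on n x y : ~ agree_on n x y -> (/ 2) ^ n <= Defs.dist x y.
Proof.
move=> hn; rewrite /Defs.dist.
case: pselect => [exy|_]; first by case: hn => i; rewrite exy.
rewrite !pow_inv; apply: Rinv_le_contravar; first by apply: pow_lt; lra.
apply: Rle_pow; first lra.
apply/leP; rewrite leqNgt; apply/negP => hlt; apply: hn => i hi.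
apply: agree_on_first_diff; lia.
Qed.

Lemma not_proximal_dist_bounded x y : ~ proximal x y ->
  exists eps, 0 < eps /\ forall k, eps <= Defs.dist (shiftk k x) (shiftk k y).
Proof.
move=> /existsNP [n /forallNP hn]; exists ((/ 2) ^ n); split.
  by apply: pow_lt; lra.
by move=> k; apply: dist_ge_not_agree_on; exact: hn.
Qed.

End Distance.

Lemma not_distal_proximal_pair (A B : finType) (X : config A -> Prop)
    (pi : config A -> config B) :
  ~ distal X pi -> exists x y, [/\ X x, X y, pi x = pi y, x <> y & proximal x y].
Proof.
move=> hnd; apply: contrapT => hno; apply: hnd => x y hx hy hpi hne.
by apply: not_proximal_dist_bounded => hprox; apply: hno; exists x, y.
Qed.

Definition zip_config (A A' : finType) (u : config A) (v : config A') :
  config (prod A A') := fun i => (u i, v i).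

Section FactorMap.
Variables (A B : finType) (X : config A -> Prop) (pi : config A -> config B).
Hypotheses (X_closed : Defs.closed_set X) (X_invariant : shift_invariant X).
Hypothesis pi_shift : forall x, X x -> pi (shift x) = shift (pi x).
Hypothesis pi_continuous : forall x, X x -> forall n : nat, exists m : nat,
  forall x', X x' -> agree_on m x x' -> agree_on n (pi x) (pi x').

Lemma pi_shiftk k x : X x -> pi (shiftk k x) = shiftk k (pi x).
Proof.
move=> hx; elim/int_ind_step: k => [|k]; first by rewrite !shiftk0.
rewrite -!shift_shiftk pi_shift; last exact: shift_invariant_shiftk.
by split=> [-> // | /shift_inj].
Qed.

Lemma closed_set_cluster (w : nat -> config A) c : (forall n, X (w n)) ->
  (forall m, infinitely_often (fun n => agree_on m (w n) c)) -> X c.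
Proof.
by move=> hw hc; apply: X_closed => m; have [n _ ?] := hc m 0%nat; exists (w n).
Qed.

Lemma limit_fiber_pair x x' (d : nat -> int) : X x -> X x' -> pi x = pi x' ->
  (forall n, x (d n) <> x' (d n)) ->
  exists z z', [/\ X z, X z', pi z = pi z', z 0 <> z' 0 &
    forall i, (exists N, forall n, (N <= n)%nat ->
                 shiftk (d n) x i = shiftk (d n) x' i) -> z i = z' i].
Proof.
move=> hx hx' hpi hd.
pose u n := shiftk (d n) x; pose u' n := shiftk (d n) x'.
have hu n : X (u n) by apply: shift_invariant_shiftk.
have hu' n : X (u' n) by apply: shift_invariant_shiftk.
have [c hc] := cluster_point (fun n => zip_config (u n) (u' n)).
pose z i := (c i).1; pose z' i := (c i).2.
have hzc m n : agree_on m (zip_config (u n) (u' n)) c ->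
    agree_on m (u n) z /\ agree_on m (u' n) z'.
  by move=> h; split=> i /h hi; rewrite /z /z' -hi.
have hz : X z.
  by apply: closed_set_cluster hu _ => m N; have [n hn /hzc[]] := hc m N; exists n.
have hz' : X z'.
  by apply: closed_set_cluster hu' _ => m N; have [n hn /hzc[]] := hc m N; exists n.
exists z, z'; split => //.
- apply: funext => j.
  have [m1 hm1] := pi_continuous hz `|j|%nat.
  have [m2 hm2] := pi_continuous hz' `|j|%nat.
  have [n _ /hzc [h1 h2]] := hc (maxn m1 m2) 0%nat.
  have e1 := hm1 _ (hu n) (agree_on_sym (agree_on_le (leq_maxl _ _) h1)).
  have e2 := hm2 _ (hu' n) (agree_on_sym (agree_on_le (leq_maxr _ _) h2)).
  by rewrite e1 // e2 // !pi_shiftk // hpi.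
- have [n _ /hzc [h1 h2]] := hc 0%nat 0%nat.
  by rewrite -h1 // -h2 // /u /u' /shiftk add0r; exact: hd.
- move=> i [N hN]; have [n hn /hzc [h1 h2]] := hc `|i|%nat N.
  by rewrite -h1 // -h2 //; exact: hN.
Qed.

Lemma right_asymptotic_limit x x' : X x -> X x' -> pi x = pi x' ->
  (forall n, disagree_then_agree n x x') ->
  exists z z', [/\ X z, X z', pi z = pi z' & right_asymptotic z z'].
Proof.
move=> hx hx' hpi /choice [d hd].
have [z [z' [hz hz' hpiz hz0 hzi]]] := limit_fiber_pair hx hx' hpi (fun n => (hd n).1).
exists z, z'; split => //; exists 0; split => // i hi; apply: hzi.
have [j eij] : exists j : nat, i = j%:Z by exists `|i|%nat; lia.
subst i.
by exists j => n hn; rewrite /shiftk addrC; apply: (hd n).2; lia.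
Qed.

Lemma left_asymptotic_limit x x' : X x -> X x' -> pi x = pi x' ->
  (forall n, disagree_then_agree n (mirror x) (mirror x')) ->
  exists z z', [/\ X z, X z', pi z = pi z' & left_asymptotic z z'].
Proof.
move=> hx hx' hpi /choice [d hd].
have [z [z' [hz hz' hpiz hz0 hzi]]] :=
  limit_fiber_pair (d := fun n => - d n) hx hx' hpi (fun n => (hd n).1).
exists z, z'; split => //; exists 0; split => // i hi; apply: hzi.
have [j eij] : exists j : nat, i = - j%:Z by exists `|i|%nat; lia.
subst i.
exists j => n hn; rewrite /shiftk -opprD addrC.
by apply: (hd n).2; lia.
Qed.

Lemma asymptotic_pair_of_proximal x x' : X x -> X x' -> pi x = pi x' ->
  x <> x' -> proximal x x' ->
  exists z z', [/\ X z, X z', pi z = pi z' &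
    right_asymptotic z z' \/ left_asymptotic z z'].
Proof.
move=> hx hx' hpi hne hprox.
case: (proximal_disagree_then_agree hne hprox)
  => [/right_asymptotic_limit | /left_asymptotic_limit].
- by move=> /(_ hx hx' hpi) [z [z' [? ? ? ?]]]; exists z, z'; split; auto.
- by move=> /(_ hx hx' hpi) [z [z' [? ? ? ?]]]; exists z, z'; split; auto.
Qed.

End FactorMap.

Theorem lemma6p4 (A B : finType) (X : config A -> Prop) (Y : config B -> Prop)
    (pi : config A -> config B) :
  minimal_subshift X -> minimal_subshift Y -> factor_map X Y pi ->
  distal X pi \/
  exists y : config B, Y y /\
    exists x x' : config A, [/\ X x, X x', pi x = y, pi x' = y &
      (right_asymptotic x x' \/ left_asymptotic x x')].
Proof.
move=> [[X_closed X_invariant] _] _ [piXY _ pi_shift pi_continuous].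
case: (pselect (distal X pi)) => [|/not_distal_proximal_pair]; first by left.
move=> [x [x' [hx hx' hpi hne hprox]]].
have [z [z' [hz hz' hpiz hasym]]] := asymptotic_pair_of_proximal
  X_closed X_invariant pi_shift pi_continuous hx hx' hpi hne hprox.
by right; exists (pi z); split; [exact: piXY | exists z, z'].
Qed.
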